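(* Let $L=\langle S,A,\to\rangle$ be a labelled transition system. For all $x,y\in\{o,b\}$ and all states $s,t\in S$, we have $s \mathrel{\underline{\leftrightarrow}}_{(x,y)} t$ (i.e. $s$ and $t$ are $(x,y)$-generic bisimilar) if and only if $s \equiv_{E(x,y)} t$ (i.e. Duplicator wins the $E(x,y)$-generic bisimulation game from $\langle (s,t),\dagger,\dagger,*\rangle_S$).
   Context: A labelled transition system (LTS) is $L=\langle S,A,\to\rangle$ with $S$ a set of states, $A$ a set of actions containing a special internal action $\tau$, and $\to\subseteq S\times A\times S$; write $s\xrightarrow{a}t$ for $(s,a,t)\in\to$. Let $\twoheadrightarrow$ be the reflexive-transitive closure of $\xrightarrow{\tau}$. Generic bisimulation. For $R\subseteq S\times S$ and $s,s',t\in S$: $s\twoheadrightarrow_{o,R,t}s'$ iff $s\twoheadrightarrow s'$; $s\twoheadrightarrow_{b,R,t}s'$ iff $s\twoheadrightarrow s'$, $t\,R\,s$ and $t\,R\,s'$. For $x,y\in\{o,b\}$, a symmetric relation $R\subseteq S\times S$ is an $(x,y)$-generic bisimulation if whenever $s\,R\,t$ and $s\xrightarrow{a}s'$, either (i) $a=\tau$ and $s'\,R\,t$, or (ii) there exist $t',t_1,t_2$ with $t\twoheadrightarrow_{x,R,s}t_1\xrightarrow{a}t_2\twoheadrightarrow_{y,R,s'}t'$ and $s'\,R\,t'$. Write $s\mathrel{\underline{\leftrightarrow}}_{(x,y)}t$ iff some $(x,y)$-generic bisimulation relates $s$ and $t$. Generic bisimulation game. Let $\frown,\smile$ be two formal tags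 and $E\subseteq\{\frown,\smile\}$. The $E$-generic bisimulation game on $L$ is played by Spoiler and Duplicator on Spoiler-owned configurations $\langle (s,t),c,m,r\rangle_S$ and Duplicator-owned configurations $\langle (s,t),c,m,r\rangle_D$, where $(s,t)\in S\times S$, $c\in (A\times S)\cup\{\dagger\}$ (challenge), $m\in (S\times\{\frown,\smile\})\cup\{\dagger\}$ (partial match), $r\in\{*,\checkmark\}$ (reward). From $\langle (s,t),c,m,r\rangle_S$ Spoiler may: (S1) move to $\langle (s,t),c,m,*\rangle_D$ if $c\neq\dagger$; (S2a) for some $s\xrightarrow{a}s'$, move to $\langle (s,t),(a,s'),(t,\frown),*\rangle_D$ if $c=\dagger$; (S2b) for some $s\xrightarrow{a}s'$, move to $\langle (s,t),(a,s'),(t,\frown),\checkmark\rangle_D$ if $c\neq (a,s')$; (S3) for some $t\xrightarrow{a}t'$, move to $\langle (t,s),(a,t'),(s,\frown),\checkmark\rangle_D$. From $\langle (u,v),(a,u'),(\bar v,f),r\rangle_D$ Duplicator may: (D1) move to $\langle (u',\bar v),\dagger,\dagger,\checkmark\rangle_S$ if $a=\tau$; (D2) if $f=\frown$ and $\bar v\xrightarrow{a}v'$: (a) move to $\langle (u',v'),(a,u'),(v',\smile),*\rangle_S$, or (b) move to $\langle (u',v'),\dagger,\dagger,\checkmark\rangle_S$, or (c) only if $\smile\in E$, move to $\langle (u,v),(a,u'),(v',\smile),*\rangle_S$; (D3) for some $\bar v\xrightarrow{\tau}v'$: (a) move to $\langle (u,v'),(a,u'),(v',f),*\rangle_S$,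 or (b) only if $f=\smile$, move to $\langle (u',v'),\dagger,\dagger,\checkmark\rangle_S$, or (c) only if $f\in E$, move to $\langle (u,v),(a,u'),(v',f),*\rangle_S$. Duplicator wins a finite play if Spoiler gets stuck, and an infinite play if it contains infinitely many configurations with reward $\checkmark$; all other plays are won by Spoiler. A player wins a configuration if she has a strategy that wins all plays starting in it. Write $s\equiv_E t$ iff Duplicator wins $\langle (s,t),\dagger,\dagger,*\rangle_S$. $E(x,y)$ is the smallest set such that $\frown\in E(o,y)$ and $\smile\in E(x,o)$ for all $x,y\in\{o,b\}$; thus $E(b,b)=\emptyset$, $E(o,b)=\{\frown\}$, $E(b,o)=\{\smile\}$, $E(o,o)=\{\frown,\smile\}$. *)

From Stdlib Require Import List.
Set Implicit Arguments.

Inductive tau_star {St Act : Type} (tau : Act) (tr : St -> Act -> St -> Prop)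
  : St -> St -> Prop :=
| ts_refl s : tau_star tau tr s s
| ts_step s s1 s' : tr s tau s1 -> tau_star tau tr s1 s' -> tau_star tau tr s s'.

Inductive Mode := O | B.

Definition gstep {St Act : Type} (tau : Act) (tr : St -> Act -> St -> Prop)
  (x : Mode) (R : St -> St -> Prop) (t s s' : St) : Prop :=
  match x with
  | O => tau_star tau tr s s'
  | B => tau_star tau tr s s' /\ R t s /\ R t s'
  end.

Definition generic_bisim {St Act : Type} (tau : Act) (tr : St -> Act -> St -> Prop)
  (x y : Mode) (R : St -> St -> Prop) : Prop :=
  (forall s t, R s t -> R t s) /\
  (forall s t a s', R s t -> tr s a s' ->
     (a = tau /\ R s' t) \/
     (exists t' t1 t2, gstep tau tr x R s t t1 /\ tr t1 a t2 /\
                       gstep tau tr y R s' t2 t' /\ R s' t')).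

Definition generic_bisimilar {St Act : Type} (tau : Act) (tr : St -> Act -> St -> Prop)
  (x y : Mode) (s t : St) : Prop :=
  exists R, generic_bisim tau tr x y R /\ R s t.

Inductive Tag := Frown | Smile.

Definition tagset := Tag -> bool.

Definition Exy (x y : Mode) : tagset :=
  fun f => match f with
           | Frown => match x with O => true | B => false end
           | Smile => match y with O => true | B => false end
           end.

Inductive Player := Spoiler | Duplicator.

(** Configurations ⟨(s,t), c, m, r⟩_P.  [None] encodes †; the reward
    [true] encodes ✓ and [false] encodes *. *)
Record config (St Act : Type) := Cfg {
  cpos : St * St;
  cch : option (Act * St);
  cm : option (St * Tag);
  ccheck : bool;
  cown : Player }.
Arguments Cfg {St Act}.

Inductive move {St Act : Type} (tau : Act) (tr : St -> Act -> St -> Prop) (E : tagset)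
  : config St Act -> config St Act -> Prop :=
| mS1 s t c m r : c <> None ->
    move tau tr E (Cfg (s,t) c m r Spoiler) (Cfg (s,t) c m false Duplicator)
| mS2a s t m r a s' : tr s a s' ->
    move tau tr E (Cfg (s,t) None m r Spoiler)
         (Cfg (s,t) (Some (a,s')) (Some (t,Frown)) false Duplicator)
| mS2b s t c m r a s' : tr s a s' -> c <> Some (a,s') ->
    move tau tr E (Cfg (s,t) c m r Spoiler)
         (Cfg (s,t) (Some (a,s')) (Some (t,Frown)) true Duplicator)
| mS3 s t c m r a t' : tr t a t' ->
    move tau tr E (Cfg (s,t) c m r Spoiler)
         (Cfg (t,s) (Some (a,t')) (Some (s,Frown)) true Duplicator)
| mD1 u v a u' vb f r : a = tau ->
    move tau tr E (Cfg (u,v) (Some (a,u')) (Some (vb,f)) r Duplicator)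
         (Cfg (u',vb) None None true Spoiler)
| mD2a u v a u' vb f r v' : f = Frown -> tr vb a v' ->
    move tau tr E (Cfg (u,v) (Some (a,u')) (Some (vb,f)) r Duplicator)
         (Cfg (u',v') (Some (a,u')) (Some (v',Smile)) false Spoiler)
| mD2b u v a u' vb f r v' : f = Frown -> tr vb a v' ->
    move tau tr E (Cfg (u,v) (Some (a,u')) (Some (vb,f)) r Duplicator)
         (Cfg (u',v') None None true Spoiler)
| mD2c u v a u' vb f r v' : f = Frown -> tr vb a v' -> E Smile = true ->
    move tau tr E (Cfg (u,v) (Some (a,u')) (Some (vb,f)) r Duplicator)
         (Cfg (u,v) (Some (a,u')) (Some (v',Smile)) false Spoiler)
| mD3a u v a u' vb f r v' : tr vb tau v' ->
    move tau tr E (Cfg (u,v) (Some (a,u')) (Some (vb,f)) r Duplicator)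
         (Cfg (u,v') (Some (a,u')) (Some (v',f)) false Spoiler)
| mD3b u v a u' vb f r v' : tr vb tau v' -> f = Smile ->
    move tau tr E (Cfg (u,v) (Some (a,u')) (Some (vb,f)) r Duplicator)
         (Cfg (u',v') None None true Spoiler)
| mD3c u v a u' vb f r v' : tr vb tau v' -> E f = true ->
    move tau tr E (Cfg (u,v) (Some (a,u')) (Some (vb,f)) r Duplicator)
         (Cfg (u,v) (Some (a,u')) (Some (v',f)) false Spoiler).

(** A (history-dependent, deterministic) Duplicator strategy: given the
    history of previous configurations (oldest first) and the current
    configuration, it chooses the next configuration. *)
Definition strategy (St Act : Type) :=
  list (config St Act) -> config St Act -> config St Act.

Definition hist {C : Type} (p : nat -> C) (i : nat) : list C :=
  map p (seq 0 i).

Definition consistent_prefix {St Act : Type} (tau : Act) (tr : St -> Act -> St -> Prop)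
  (E : tagset) (sigma : strategy St Act) (p : nat -> config St Act) (n : nat) : Prop :=
  forall i, i < n ->
    move tau tr E (p i) (p (S i)) /\
    (cown (p i) = Duplicator -> p (S i) = sigma (hist p i) (p i)).

Definition legal_strategy {St Act : Type} (tau : Act) (tr : St -> Act -> St -> Prop)
  (E : tagset) (sigma : strategy St Act) (c0 : config St Act) : Prop :=
  forall p n, p 0 = c0 -> consistent_prefix tau tr E sigma p n ->
    cown (p n) = Duplicator -> move tau tr E (p n) (sigma (hist p n) (p n)).

(** Length of a play: finite ending at index n, or infinite. *)
Inductive plen := Fin (n : nat) | Inf.

Definition is_play {St Act : Type} (tau : Act) (tr : St -> Act -> St -> Prop)
  (E : tagset) (sigma : strategy St Act) (c0 : config St Act)
  (p : nat -> config St Act) (len : plen) : Prop :=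
  p 0 = c0 /\
  match len with
  | Fin n => consistent_prefix tau tr E sigma p n /\
             (forall d, ~ move tau tr E (p n) d)
  | Inf => forall n, consistent_prefix tau tr E sigma p n
  end.

Definition dup_wins_play {St Act : Type} (p : nat -> config St Act) (len : plen) : Prop :=
  match len with
  | Fin n => cown (p n) = Spoiler
  | Inf => forall N, exists i, N <= i /\ ccheck (p i) = true
  end.

Definition dup_wins {St Act : Type} (tau : Act) (tr : St -> Act -> St -> Prop)
  (E : tagset) (c0 : config St Act) : Prop :=
  exists sigma : strategy St Act,
    legal_strategy tau tr E sigma c0 /\
    forall p len, is_play tau tr E sigma c0 p len -> dup_wins_play p len.

Definition game_equiv {St Act : Type} (tau : Act) (tr : St -> Act -> St -> Prop)
  (E : tagset) (s t : St) : Prop :=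
  dup_wins tau tr E (Cfg (s,t) None None false Spoiler).

From Stdlib Require Import List Arith Lia Classical ClassicalEpsilon.
Import ListNotations.
Set Implicit Arguments.

(* Both directions go through semi-branching bisimulations, where a tau-step may
   also be answered by a tau-path.  The largest one is closed under stuttering,
   hence is itself an (x,y)-generic bisimulation.

   On the game side, rewards ✓ come from fresh challenges (S2b, S3) and from
   resets (D1, D2b, D3b).  So a Duplicator configuration is won iff Duplicator,
   facing a Spoiler who insists on the pending challenge with (S1), can force a
   reset through won configurations; conversely, every set of configurations
   closed under Spoiler moves, from which Duplicator can always force such a
   reset, is won by the strategy that minimises the number of rounds to reset.

   Soundness: the positions Duplicator passes through while answering a
   challenge from a won configuration form a semi-branching bisimulation.
   Completeness: Duplicator follows the matching path of the bisimulation; E(x,y)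
   contains exactly the tags needed to stay put in mode o (D2c, D3c), and in
   mode b (D3a) stuttering keeps the moving position related. *)

Section TauPaths.
Context {St Act : Type} {tau : Act} {tr : St -> Act -> St -> Prop}.
Notation ts := (tau_star tau tr).

Lemma tau_star_one {s s'} : tr s tau s' -> ts s s'.
Proof. intro H. eapply ts_step; [exact H | apply ts_refl]. Qed.

Lemma tau_star_trans s1 s2 s3 : ts s1 s2 -> ts s2 s3 -> ts s1 s3.
Proof. induction 1; intros; [assumption | eapply ts_step; eauto]. Qed.

Lemma tau_star_snoc {s1 s2 s3} : ts s1 s2 -> tr s2 tau s3 -> ts s1 s3.
Proof. intros H12 H23. exact (tau_star_trans H12 (tau_star_one H23)). Qed.

Lemma tau_star_last {s s'} : ts s s' -> s = s' \/ exists s1, ts s s1 /\ tr s1 tau s'.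
Proof.
  induction 1 as [s | s s1 s' H1 _ [<- | [s2 [H12 H2]]]]; [now left | right ..].
  - exists s. split; [apply ts_refl | exact H1].
  - exists s2. split; [eapply ts_step; eauto | exact H2].
Qed.

Lemma gstep_iff x (R : St -> St -> Prop) t s s' :
  gstep tau tr x R t s s' <-> ts s s' /\ (x = B -> R t s /\ R t s').
Proof. destruct x; simpl; intuition discriminate. Qed.

Lemma gstep_mono {x} {R R' : St -> St -> Prop} {t s s'} :
  (forall p q, R p q -> R' p q) -> gstep tau tr x R t s s' -> gstep tau tr x R' t s s'.
Proof. rewrite !gstep_iff. firstorder. Qed.

Lemma gstep_tau_star_l x (R : St -> St -> Prop) t q s s' :
  R t q -> ts q s -> gstep tau tr x R t s s' -> gstep tau tr x R t q s'.
Proof. rewrite !gstep_iff. intros Htq Hqs [Hss' HB]. split; [eapply tau_star_trans; eauto | firstorder]. Qed.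

End TauPaths.

Section SemiBranching.
Context {St Act : Type} (tau : Act) (tr : St -> Act -> St -> Prop).
Notation ts := (tau_star tau tr).
Variables x y : Mode.

Definition semi_match (R : St -> St -> Prop) (s t : St) (a : Act) (s' : St) : Prop :=
  (a = tau /\ exists t', ts t t' /\ R s t' /\ R s' t') \/
  (exists t' t1 t2, gstep tau tr x R s t t1 /\ tr t1 a t2 /\
                    gstep tau tr y R s' t2 t' /\ R s' t').

Definition semi_bisim (R : St -> St -> Prop) : Prop :=
  (forall s t, R s t -> R t s) /\
  (forall s t a s', R s t -> tr s a s' -> semi_match R s t a s').

Definition semi_bisimilar (s t : St) : Prop := exists R, semi_bisim R /\ R s t.

Notation sb := semi_bisimilar.

Lemma semi_match_mono {R R' : St -> St -> Prop} {s t a s'} :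
  (forall p q, R p q -> R' p q) -> semi_match R s t a s' -> semi_match R' s t a s'.
Proof.
  intros HR [[Ha [t' [H1 [H2 H3]]]] | [t' [t1 [t2 [H1 [H2 [H3 H4]]]]]]].
  - left. split; [exact Ha |]. exists t'. auto.
  - right. exists t', t1, t2. repeat split; eauto using gstep_mono.
Qed.

Lemma semi_match_tau_star_l (R : St -> St -> Prop) s q t a s' :
  R s q -> ts q t -> semi_match R s t a s' -> semi_match R s q a s'.
Proof.
  intros Hsq Hqt [[Ha [t' [H1 H2]]] | [t' [t1 [t2 [H1 H2]]]]].
  - left. split; [exact Ha |]. exists t'. split; [eapply tau_star_trans; eauto | exact H2].
  - right. exists t', t1, t2. split; [eapply gstep_tau_star_l; eauto | exact H2].
Qed.

Lemma generic_bisim_semi R : generic_bisim tau tr x y R -> semi_bisim R.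
Proof.
  intros [Hsym Hmatch]. split; [exact Hsym |].
  intros s t a s' Hst Hs. destruct (Hmatch _ _ _ _ Hst Hs) as [[Ha Hs't] | H]; [left | now right].
  split; [exact Ha |]. exists t. split; [apply ts_refl | auto].
Qed.

Lemma semi_bisim_sub R {s t} : semi_bisim R -> R s t -> sb s t.
Proof. intros HR Hst. exists R. auto. Qed.

Lemma semi_bisimilar_sym s t : sb s t -> sb t s.
Proof. intros [R [HR Hst]]. exists R. split; [exact HR | apply HR, Hst]. Qed.

Lemma semi_bisimilar_match s t a s' : sb s t -> tr s a s' -> semi_match sb s t a s'.
Proof.
  intros [R [HR Hst]] Hs.
  exact (semi_match_mono (fun p q => semi_bisim_sub HR) (proj2 HR _ _ _ _ Hst Hs)).
Qed.

Lemma semi_bisimilar_tau_star t s u : sb t s -> ts t u -> exists v, ts s v /\ sb u v.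
Proof.
  intros Hts Htu. revert s Hts.
  induction Htu as [t | t t1 u Ht1 _ IH]; intros s Hts.
  - exists s. split; [apply ts_refl | exact Hts].
  - destruct (semi_bisimilar_match Hts Ht1)
      as [[_ [v [Hsv [_ Hv]]]] | [v [k1 [k2 [Hk1 [Hk [Hk2 Hv]]]]]]].
    + destruct (IH _ Hv) as [w [Hvw Hw]]. exists w. split; [eapply tau_star_trans; eauto | exact Hw].
    + destruct (IH _ Hv) as [w [Hvw Hw]]. exists w. split; [| exact Hw].
      apply gstep_iff in Hk1, Hk2.
      eapply tau_star_trans; [apply Hk1 |]. eapply ts_step; [exact Hk |].
      eapply tau_star_trans; [apply Hk2 | exact Hvw].
Qed.

Lemma semi_bisim_of_tau_star (R : St -> St -> Prop) :
  (forall p q, R p q -> R q p) -> (forall p q, sb p q -> R p q) ->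
  (forall p q, R p q -> exists v, ts q v /\ sb p v) -> semi_bisim R.
Proof.
  intros Hsym Hsub Hclose. split; [exact Hsym |].
  intros p q a p' Hpq Hp. destruct (Hclose _ _ Hpq) as [v [Hqv Hpv]].
  eapply semi_match_tau_star_l; [exact Hpq | exact Hqv |].
  exact (semi_match_mono Hsub (semi_bisimilar_match Hpv Hp)).
Qed.

Lemma semi_bisimilar_stutter s t u t1 : sb s t -> ts t u -> ts u t1 -> sb s t1 -> sb s u.
Proof.
  set (between p q := exists t t1, sb p t /\ ts t q /\ ts q t1 /\ sb p t1).
  intros Hst Htu Hut1 Hst1. apply semi_bisim_sub with (fun p q => between p q \/ between q p).
  - apply semi_bisim_of_tau_star.
    + intros p q [H | H]; [right | left]; exact H.
    + intros p q Hpq. left. exists q, q. repeat split; auto using ts_refl.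
    + intros p q [[t' [t1' [_ [_ [H1 H2]]]]] | [t' [t1' [H1 [H2 _]]]]].
      * exists t1'. auto.
      * exact (semi_bisimilar_tau_star (semi_bisimilar_sym H1) H2).
  - left. exists t, t1. auto.
Qed.

Lemma semi_bisimilar_generic_bisim : generic_bisim tau tr x y sb.
Proof.
  split; [exact semi_bisimilar_sym |].
  intros s t a s' Hst Hs.
  destruct (semi_bisimilar_match Hst Hs) as [[Ha [t' [Htt' [Hst' Hs't']]]] | H]; [| now right].
  destruct (tau_star_last Htt') as [<- | [t1 [Htt1 Ht1]]]; [now left |].
  right. exists t', t1, t'. subst a. repeat split; try exact Ht1; try exact Hs't'.
  - apply gstep_iff. split; [exact Htt1 |].
    intros _. split; [exact Hst |]. exact (semi_bisimilar_stutter Hst Htt1 (tau_star_one Ht1) Hst').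
  - apply gstep_iff. split; [apply ts_refl | auto].
Qed.

End SemiBranching.
Section Strategies.
Context {St Act : Type} {tau : Act} {tr : St -> Act -> St -> Prop} {E : tagset}.
Notation cfg := (config St Act).
Notation move := (move tau tr E).
Notation consistent := (consistent_prefix tau tr E).
Notation W := (dup_wins tau tr E).

Definition wins_with (sigma : strategy St Act) (c : cfg) : Prop :=
  legal_strategy tau tr E sigma c /\
  forall p len, is_play tau tr E sigma c p len -> dup_wins_play p len.

(* The configuration reached when Spoiler plays (S1) from [c]. *)
Definition continue_cfg (c : cfg) : cfg := Cfg (cpos c) (cch c) (cm c) false Duplicator.

Lemma move_from_duplicator c d : move c d -> cown c = Duplicator ->
  cown d = Spoiler /\ (cch d = None -> ccheck d = true) /\ (cch d <> None -> ccheck d = false).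
Proof. destruct 1; simpl; intros Hc; try discriminate; intuition congruence. Qed.

Lemma move_from_spoiler c d : move c d -> cown c = Spoiler ->
  cown d = Duplicator /\ (ccheck d = true \/ d = continue_cfg c \/ cch c = None).
Proof. destruct 1; simpl; intros Hc; try discriminate; unfold continue_cfg; simpl; intuition. Qed.

Lemma hist_S (p : nat -> cfg) n : hist p (S n) = hist p n ++ [p n].
Proof. unfold hist. rewrite seq_S, map_app. reflexivity. Qed.

Lemma consistent_prefix_le sigma p n k : consistent sigma p n -> k <= n -> consistent sigma p k.
Proof. intros H Hk i Hi. apply H. lia. Qed.

Lemma consistent_prefix_S sigma p n : consistent sigma p n -> move (p n) (p (S n)) ->
  (cown (p n) = Duplicator -> p (S n) = sigma (hist p n) (p n)) -> consistent sigma p (S n).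
Proof. intros Hn Hmv Hsig i Hi. destruct (Nat.eq_dec i n) as [-> | Hne]; [auto | apply Hn; lia]. Qed.

Definition splice (p q : nat -> cfg) n i := if i <? n then p i else q (i - n).

Lemma splice_l p q n k : q 0 = p n -> k <= n -> splice p q n k = p k.
Proof.
  unfold splice. intros Hq Hk. destruct (Nat.ltb_spec k n); [reflexivity |].
  replace k with n by lia. rewrite Nat.sub_diag. exact Hq.
Qed.

Lemma splice_r p q n j : splice p q n (n + j) = q j.
Proof. unfold splice. destruct (Nat.ltb_spec (n + j) n); [lia |]. f_equal. lia. Qed.

Lemma hist_splice_l p q n k : q 0 = p n -> k <= n -> hist (splice p q n) k = hist p k.
Proof.
  intros Hq Hk. apply map_ext_in. intros i Hi. apply in_seq in Hi. apply splice_l; [exact Hq | lia].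
Qed.

Lemma hist_splice_r p q n j : q 0 = p n -> hist (splice p q n) (n + j) = hist p n ++ hist q j.
Proof.
  intros Hq. induction j as [| j IH].
  - rewrite Nat.add_0_r, hist_splice_l, app_nil_r; auto.
  - rewrite Nat.add_succ_r, !hist_S, IH, splice_r, app_assoc. reflexivity.
Qed.

Lemma consistent_splice sigma p q n m :
  q 0 = p n -> consistent sigma p n ->
  consistent (fun h => sigma (hist p n ++ h)) q m ->
  consistent sigma (splice p q n) (n + m).
Proof.
  intros Hq Hp Hq' i Hi. destruct (le_lt_dec n i) as [Hni | Hin].
  - replace i with (n + (i - n)) by lia.
    rewrite <- Nat.add_succ_r, !splice_r, hist_splice_r by exact Hq. apply Hq'. lia.
  - rewrite !splice_l, hist_splice_l by (auto; lia). apply Hp, Hin.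
Qed.

Lemma wins_with_shift sigma c0 p n :
  wins_with sigma c0 -> p 0 = c0 -> consistent sigma p n ->
  wins_with (fun h => sigma (hist p n ++ h)) (p n).
Proof.
  intros [Hlegal Hwin] Hp0 Hp.
  assert (Hs0 : forall q, q 0 = p n -> splice p q n 0 = c0)
    by (intros q Hq; rewrite splice_l by (auto; lia); exact Hp0).
  split.
  - intros q m Hq0 Hq Hown.
    pose proof (Hlegal _ _ (Hs0 q Hq0) (consistent_splice Hq0 Hp Hq)) as H.
    rewrite splice_r, hist_splice_r in H by exact Hq0. exact (H Hown).
  - intros q [m |] [Hq0 Hq].
    + destruct Hq as [Hq Hstuck].
      specialize (Hwin (splice p q n) (Fin (n + m))). simpl in Hwin |- *.
      rewrite splice_r in Hwin. apply Hwin. split; [exact (Hs0 q Hq0) |].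
      rewrite splice_r. split; [exact (consistent_splice Hq0 Hp Hq) | exact Hstuck].
    + simpl. intros N.
      destruct (Hwin (splice p q n) Inf) with (N + n) as [i [Hi Hci]].
      { split; [exact (Hs0 q Hq0) |]. intros k.
        exact (consistent_prefix_le (consistent_splice Hq0 Hp (Hq k)) (Nat.le_add_l k n)). }
      exists (i - n). split; [lia |].
      replace i with (n + (i - n)) in Hci by lia. rewrite splice_r in Hci. exact Hci.
Qed.

Lemma dup_wins_spoiler_move c d : W c -> cown c = Spoiler -> move c d -> W d.
Proof.
  intros [sigma Hw] Hown Hmv.
  set (p := fun i : nat => match i with 0 => c | _ => d end).
  assert (Hp : consistent sigma p 1).
  { intros i Hi. replace i with 0 by lia. split; [exact Hmv | simpl; congruence]. }
  exists (fun h => sigma (hist p 1 ++ h)). exact (wins_with_shift Hw eq_refl Hp).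
Qed.

(* Against a Spoiler who always plays (S1), Duplicator reaches a configuration
   without pending challenge within [n] rounds, staying inside [P]. *)
Inductive forces_reset_in (P : cfg -> Prop) : nat -> cfg -> Prop :=
| forces_reset_now n c d :
    move c d -> P d -> cch d = None -> forces_reset_in P n c
| forces_reset_later n c d :
    move c d -> P d -> cch d <> None -> forces_reset_in P n (continue_cfg d) ->
    forces_reset_in P (S n) c.

Definition forces_reset (P : cfg -> Prop) (c : cfg) : Prop := exists n, forces_reset_in P n c.

Section ContinuePlay.
Variables (sigma : strategy St Act) (c0 : cfg).

Definition continue_step (h : list cfg) (c : cfg) : cfg :=
  match cown c with Spoiler => continue_cfg c | Duplicator => sigma h c end.

Fixpoint continue_run (n : nat) : list cfg * cfg :=
  match n with
  | 0 => ([], c0)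
  | S n => let (h, c) := continue_run n in (h ++ [c], continue_step h c)
  end.

Definition continue_play (n : nat) : cfg := snd (continue_run n).

Lemma continue_run_hist n : fst (continue_run n) = hist continue_play n.
Proof.
  induction n as [| n IH]; [reflexivity |].
  rewrite hist_S, <- IH. unfold continue_play. simpl. destruct (continue_run n). reflexivity.
Qed.

Lemma continue_play_S n :
  continue_play (S n) = continue_step (hist continue_play n) (continue_play n).
Proof.
  rewrite <- continue_run_hist. unfold continue_play. simpl. destruct (continue_run n). reflexivity.
Qed.
End ContinuePlay.

Lemma dup_wins_forces_reset c : W c -> cown c = Duplicator -> forces_reset W c.
Proof.
  intros [sigma Hw] Hown. apply NNPP. intro Hno.
  set (p := continue_play sigma c).
  (* Against (S1) only resets grant ✓, so without a forced reset the play never gets one. *)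
  assert (Hinv : forall n, consistent sigma p n /\
     ((cown (p n) = Duplicator /\ ~ forces_reset W (p n)) \/
      (cown (p n) = Spoiler /\ cch (p n) <> None /\ ~ forces_reset W (continue_cfg (p n)))) /\
     (0 < n -> ccheck (p n) = false)).
  { induction n as [| n [Hc [[[Hd Hn] | [Hs [Hch Hn]]] _]]].
    - split; [intros i Hi; lia |]. split; [left; auto | lia].
    - assert (HpS : p (S n) = sigma (hist p n) (p n))
        by (unfold p; rewrite continue_play_S; unfold continue_step; fold p; rewrite Hd; reflexivity).
      assert (Hmv : move (p n) (p (S n))) by (rewrite HpS; exact (proj1 Hw p n eq_refl Hc Hd)).
      assert (HcS : consistent sigma p (S n)) by (apply consistent_prefix_S; auto).
      assert (HW : W (p (S n))) by (eexists; exact (wins_with_shift Hw eq_refl HcS)).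
      destruct (move_from_duplicator Hmv Hd) as [Hown' [_ Hck]].
      assert (Hpend : cch (p (S n)) <> None)
        by (intro Hnone; apply Hn; exists 0; eapply forces_reset_now; eauto).
      split; [exact HcS |]. split; [| auto].
      right. repeat split; auto.
      intros [k Hk]. apply Hn. exists (S k). eapply forces_reset_later; eauto.
    - assert (HpS : p (S n) = continue_cfg (p n))
        by (unfold p; rewrite continue_play_S; unfold continue_step; fold p; rewrite Hs; reflexivity).
      assert (Hmv : move (p n) (p (S n))).
      { rewrite HpS. destruct (p n) as [[s t] ch m r o]. simpl in *. subst o. now apply mS1. }
      split; [apply consistent_prefix_S; auto; congruence |].
      rewrite HpS. split; [left; auto | reflexivity]. }
  destruct (proj2 Hw p Inf (conj eq_refl (fun n => proj1 (Hinv n))) 1) as [i [Hi Hci]].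
  rewrite (proj2 (proj2 (Hinv i))) in Hci by lia. discriminate.
Qed.

Section Invariant.
Variable P : cfg -> Prop.
Hypothesis P_spoiler : forall c d, P c -> cown c = Spoiler -> move c d -> P d.
Hypothesis P_duplicator : forall c, P c -> cown c = Duplicator -> forces_reset P c.

Definition reset_rank (c : cfg) : nat :=
  epsilon (inhabits 0) (fun n => forces_reset_in P n c /\ forall k, forces_reset_in P k c -> n <= k).

Lemma reset_rank_spec c : forces_reset P c ->
  forces_reset_in P (reset_rank c) c /\ forall k, forces_reset_in P k c -> reset_rank c <= k.
Proof.
  intros Hc. unfold reset_rank. apply epsilon_spec.
  destruct (dec_inh_nat_subset_has_unique_least_element (fun n => forces_reset_in P n c))
    as [n [Hn _]]; [intros n; apply classic | exact Hc | exists n; exact Hn].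
Qed.

Definition progress (c d : cfg) : Prop :=
  move c d /\ P d /\
  (cch d = None \/ exists n, n < reset_rank c /\ forces_reset_in P n (continue_cfg d)).

Definition progress_strategy : strategy St Act := fun _ c => epsilon (inhabits c) (progress c).

Lemma progress_strategy_spec h c : P c -> cown c = Duplicator -> progress c (progress_strategy h c).
Proof.
  intros Hc Hown. unfold progress_strategy. apply epsilon_spec.
  destruct (reset_rank_spec (P_duplicator Hc Hown)) as [Hrank _].
  inversion Hrank as [n c' d Hmv Hd Hnone | n c' d Hmv Hd Hpend Hnext]; subst.
  - exists d. repeat split; auto.
  - exists d. repeat split; auto. right. exists n. split; [lia | exact Hnext].
Qed.

Section FromStart.
Variables (c0 : cfg) (p : nat -> cfg).
Hypotheses (Hc0 : P c0) (Hp0 : p 0 = c0).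

Lemma progress_play_in_P n : consistent progress_strategy p n -> P (p n).
Proof.
  induction n as [| n IH]; intros Hc; [rewrite Hp0; exact Hc0 |].
  assert (HPn := IH (consistent_prefix_le Hc (Nat.le_succ_diag_r n))).
  destruct (Hc n (Nat.lt_succ_diag_r n)) as [Hmv Hsig].
  destruct (cown (p n)) eqn:Hown.
  - exact (P_spoiler HPn Hown Hmv).
  - rewrite (Hsig eq_refl). apply (progress_strategy_spec _ HPn Hown).
Qed.

Lemma progress_play_step n : consistent progress_strategy p n -> cown (p n) = Duplicator ->
  progress (p n) (progress_strategy (hist p n) (p n)).
Proof. intros Hc Hown. exact (progress_strategy_spec _ (progress_play_in_P Hc) Hown). Qed.

Hypothesis Hinf : forall n, consistent progress_strategy p n.

Lemma progress_play_two_rounds i : cown (p i) = Duplicator ->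
  ccheck (p (S i)) = true \/ ccheck (p (S (S i))) = true \/
  (cown (p (S (S i))) = Duplicator /\ reset_rank (p (S (S i))) < reset_rank (p i)).
Proof.
  intros Hown.
  destruct (@Hinf (S (S i)) i ltac:(lia)) as [Hmv1 Hsig].
  destruct (@Hinf (S (S i)) (S i) ltac:(lia)) as [Hmv2 _].
  destruct (move_from_duplicator Hmv1 Hown) as [Hown1 [Hreset _]].
  destruct (cch (p (S i))) as [ch |] eqn:Hch; [| left; auto].
  destruct (progress_play_step (@Hinf i) Hown) as [_ [_ [Hnone | [n [Hlt Hn]]]]];
    rewrite <- (Hsig Hown) in *; [congruence |].
  destruct (move_from_spoiler Hmv2 Hown1) as [Hown2 [Hck | [Heq | Hnone]]]; [auto | | congruence].
  right. right. split; [exact Hown2 |].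
  rewrite Heq. assert (Hle := proj2 (reset_rank_spec (ex_intro _ n Hn)) n Hn). lia.
Qed.

Lemma progress_play_rewards i : exists j, i <= j /\ ccheck (p j) = true.
Proof.
  assert (Hdup : forall k i, cown (p i) = Duplicator -> reset_rank (p i) <= k ->
                 exists j, i <= j /\ ccheck (p j) = true).
  { induction k as [k IH] using lt_wf_ind. intros i' Hown Hk.
    destruct (progress_play_two_rounds i' Hown) as [H | [H | [Hown2 Hlt]]].
    - exists (S i'). auto.
    - exists (S (S i')). auto.
    - destruct (IH (reset_rank (p (S (S i')))) ltac:(lia) (S (S i')) Hown2 (le_n _))
        as [j [Hj Hck]].
      exists j. split; [lia | exact Hck]. }
  destruct (cown (p i)) eqn:Hown; [| exact (Hdup _ i Hown (le_n _))].
  destruct (@Hinf (S i) i ltac:(lia)) as [Hmv _].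
  destruct (Hdup _ (S i) (proj1 (move_from_spoiler Hmv Hown)) (le_n _)) as [j [Hj Hck]].
  exists j. split; [lia | exact Hck].
Qed.
End FromStart.

Lemma dup_wins_of_invariant c0 : P c0 -> W c0.
Proof.
  intros Hc0. exists progress_strategy.
  assert (Hlegal : legal_strategy tau tr E progress_strategy c0).
  { intros p n Hp0 Hc Hown. exact (proj1 (progress_play_step Hc0 Hp0 Hc Hown)). }
  split; [exact Hlegal |].
  intros p [n |] [Hp0 Hplay]; simpl.
  - destruct Hplay as [Hc Hstuck]. destruct (cown (p n)) eqn:Hown; [reflexivity |].
    destruct (Hstuck _ (Hlegal p n Hp0 Hc Hown)).
  - intros N. exact (progress_play_rewards Hc0 Hp0 Hplay N).
Qed.
End Invariant.

End Strategies.

Lemma Exy_frown x y : Exy x y Frown = true <-> x = O.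
Proof. destruct x; simpl; intuition discriminate. Qed.

Lemma Exy_smile x y : Exy x y Smile = true <-> y = O.
Proof. destruct x, y; simpl; intuition discriminate. Qed.

Section Soundness.
Context {St Act : Type} (tau : Act) (tr : St -> Act -> St -> Prop) (x y : Mode).
Notation ts := (tau_star tau tr).
Notation cfg := (config St Act).
Notation W := (dup_wins tau tr (Exy x y)).
Notation move := (move tau tr (Exy x y)).
Notation forces_reset_in := (@forces_reset_in _ _ tau tr (Exy x y)).

(* The Spoiler configurations at position [(p, q)] that occur while Duplicator
   answers a challenge: a fresh start, a pending (⌢)-match from [q], and the
   (⌣)-state right after Duplicator matched the visible step leading to [p]. *)
Definition won_at (p q : St) : Prop :=
  (exists r, W (Cfg (p, q) None None r Spoiler)) \/
  (exists a p' r, W (Cfg (p, q) (Some (a, p')) (Some (q, Frown)) r Spoiler)) \/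
  (exists a r, W (Cfg (p, q) (Some (a, p)) (Some (q, Smile)) r Spoiler)).

Definition game_rel (p q : St) : Prop := won_at p q \/ won_at q p.

Notation sm := (semi_match tau tr x y game_rel).

Lemma game_rel_reset p q r : W (Cfg (p, q) None None r Spoiler) -> game_rel p q.
Proof. intros H. left. left. eauto. Qed.

Section Answer.
Variables (u v u' : St) (a : Act).
Hypothesis Huv : game_rel u v.

(* How far Duplicator has come in answering the challenge [u --a--> u'] from [v]. *)
Definition answering (c : cfg) : Prop :=
  exists P1 P2 m f r, c = Cfg (P1, P2) (Some (a, u')) (Some (m, f)) r Duplicator /\
    (f = Frown -> P1 = u /\ ts v m /\ (x = B -> game_rel u m)) /\
    (f = Smile -> exists t1 t2, ts v t1 /\ (x = B -> game_rel u t1) /\ tr t1 a t2 /\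
                                ts t2 m /\ (y = B -> game_rel u' t2)).

Lemma answering_reset c d : answering c -> move c d -> W d -> cch d = None -> sm u v a u'.
Proof.
  intros [P1 [P2 [m [f [r [-> [HF HS]]]]]]] Hmv Hwd Hnone.
  inversion Hmv; subst; simpl in Hnone; try discriminate; apply game_rel_reset in Hwd.
  - destruct f.
    + destruct (HF eq_refl) as [-> [Hvm Hxm]]. destruct x eqn:Hx.
      * destruct (tau_star_last Hvm) as [<- | [t1 [Hvt1 Ht1]]].
        -- left. split; [reflexivity |]. exists v. split; [apply ts_refl | auto].
        -- right. exists m, t1, m. split; [| split; [exact Ht1 | split; [| exact Hwd]]].
           ++ apply gstep_iff. split; [exact Hvt1 | discriminate].
           ++ apply gstep_iff. split; [apply ts_refl | auto].
      * left. split; [reflexivity |]. exists m. auto.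
    + destruct (HS eq_refl) as [t1 [t2 [Hvt1 [Hx [Ht [Ht2m Hy]]]]]].
      right. exists m, t1, t2. repeat split; auto; apply gstep_iff; auto.
  - destruct (HF eq_refl) as [-> [Hvm Hxm]].
    right. exists v', m, v'. repeat split; auto; apply gstep_iff; auto using ts_refl.
  - destruct (HS eq_refl) as [t1 [t2 [Hvt1 [Hx [Ht [Ht2m Hy]]]]]].
    right. exists v', t1, t2. repeat split; auto; apply gstep_iff; split; auto.
    eapply tau_star_snoc; eauto.
Qed.

Lemma answering_continue c d : answering c -> move c d -> W d -> cch d <> None ->
  answering (continue_cfg d).
Proof.
  intros [P1 [P2 [m [f [r [-> [HF HS]]]]]]] Hmv Hwd Hpend.
  inversion Hmv; subst; simpl in Hpend; try congruence; unfold continue_cfg; simpl.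
  - destruct (HF eq_refl) as [-> [Hvm Hxm]].
    eexists _, _, _, Smile, _. split; [reflexivity |]. split; [discriminate |].
    intros _. exists m, v'. repeat split; auto using ts_refl.
    intros _. left. right. right. eauto.
  - destruct (HF eq_refl) as [-> [Hvm Hxm]].
    eexists _, _, _, Smile, _. split; [reflexivity |]. split; [discriminate |].
    intros _. exists m, v'. repeat split; auto using ts_refl.
    intros Hy. rewrite Exy_smile in *. congruence.
  - eexists _, _, _, f, _. split; [reflexivity |]. split.
    + intros ->. destruct (HF eq_refl) as [-> [Hvm Hxm]].
      split; [reflexivity |]. split; [eapply tau_star_snoc; eauto |].
      intros _. left. right. left. eauto.
    + intros ->. destruct (HS eq_refl) as [t1 [t2 [Hvt1 [Hx [Ht [Ht2m Hy]]]]]].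
      exists t1, t2. repeat split; auto. eapply tau_star_snoc; eauto.
  - eexists _, _, _, f, _. split; [reflexivity |]. split.
    + intros ->. destruct (HF eq_refl) as [-> [Hvm Hxm]].
      split; [reflexivity |]. split; [eapply tau_star_snoc; eauto |].
      intros Hx. rewrite Exy_frown in *. congruence.
    + intros ->. destruct (HS eq_refl) as [t1 [t2 [Hvt1 [Hx [Ht [Ht2m Hy]]]]]].
      exists t1, t2. repeat split; auto. eapply tau_star_snoc; eauto.
Qed.

Lemma answering_match n c : forces_reset_in W n c -> answering c -> sm u v a u'.
Proof.
  induction 1 as [n c d Hmv Hd Hnone | n c d Hmv Hd Hpend _ IH]; intros Hc.
  - exact (answering_reset Hc Hmv Hd Hnone).
  - exact (IH (answering_continue Hc Hmv Hd Hpend)).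
Qed.
End Answer.

Lemma dup_wins_challenge u v a u' r :
  W (Cfg (u, v) (Some (a, u')) (Some (v, Frown)) r Duplicator) -> game_rel u v ->
  sm u v a u'.
Proof.
  intros Hw Huv. destruct (dup_wins_forces_reset Hw eq_refl) as [n Hn].
  apply (answering_match Huv Hn).
  exists u, v, v, Frown, r. split; [reflexivity |]. split; [| discriminate].
  intros _. repeat split; auto using ts_refl.
Qed.

Lemma smile_reset q a u' n c : forces_reset_in W n c ->
  (exists P1 P2 m r, c = Cfg (P1, P2) (Some (a, u')) (Some (m, Smile)) r Duplicator /\ ts q m) ->
  exists t' r', ts q t' /\ W (Cfg (u', t') None None r' Spoiler).
Proof.
  induction 1 as [n c d Hmv Hd Hnone | n c d Hmv Hd Hpend _ IH];
    intros [P1 [P2 [m [r [-> Hqm]]]]].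
  - inversion Hmv; subst; simpl in Hnone; try discriminate.
    + exists m, true. auto.
    + exists v', true. split; [eapply tau_star_snoc; eauto | exact Hd].
  - apply IH. inversion Hmv; subst; simpl in Hpend; try congruence; unfold continue_cfg; simpl;
      eexists _, _, _, _; (split; [reflexivity | eapply tau_star_snoc; eauto]).
Qed.

Lemma won_at_dup_wins p q : won_at p q -> exists c m r, W (Cfg (p, q) c m r Spoiler).
Proof. intros [[r H] | [[a [p' [r H]]] | [a [r H]]]]; eauto. Qed.

Lemma won_at_match_r p q b p' : won_at q p -> tr p b p' -> sm p q b p'.
Proof.
  intros H Hp. destruct (won_at_dup_wins H) as [c [m [r Hw]]].
  eapply dup_wins_challenge; [| right; exact H].
  eapply dup_wins_spoiler_move; [exact Hw | reflexivity |]. apply mS3. exact Hp.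
Qed.

Lemma won_at_match_l p q b p' : won_at p q -> tr p b p' -> sm p q b p'.
Proof.
  intros H Hp. assert (Hpq : game_rel p q) by (left; exact H).
  assert (Hfresh : forall c m r, W (Cfg (p, q) c m r Spoiler) -> c <> Some (b, p') -> sm p q b p').
  { intros c m r Hw Hc. eapply dup_wins_challenge; [| exact Hpq].
    eapply dup_wins_spoiler_move; [exact Hw | reflexivity |]. apply mS2b; [exact Hp | exact Hc]. }
  destruct H as [[r Hw] | [[a [p0 [r Hw]]] | [a [r Hw]]]].
  - apply (Hfresh _ _ _ Hw). discriminate.
  - destruct (classic (Some (b, p') = Some (a, p0))) as [Heq | Hne]; [| exact (Hfresh _ _ _ Hw (not_eq_sym Hne))].
    injection Heq as -> ->. eapply dup_wins_challenge; [| exact Hpq].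
    eapply dup_wins_spoiler_move; [exact Hw | reflexivity |]. apply mS1. discriminate.
  - destruct (classic (Some (b, p') = Some (a, p))) as [Heq | Hne]; [| exact (Hfresh _ _ _ Hw (not_eq_sym Hne))].
    (* [p --a--> p] repeats the pending challenge, so Spoiler cannot play it
       afresh; he waits (S1) for Duplicator's reset at some [(p, t')] instead. *)
    injection Heq as -> ->.
    assert (Hw1 : W (Cfg (p, q) (Some (a, p)) (Some (q, Smile)) false Duplicator)).
    { eapply dup_wins_spoiler_move; [exact Hw | reflexivity |]. apply mS1. discriminate. }
    destruct (dup_wins_forces_reset Hw1 eq_refl) as [n Hn].
    destruct (smile_reset (q := q) (a := a) (u' := p) Hn) as [t' [r' [Hqt' Hw2]]].
    { exists p, q, q, false. split; [reflexivity | apply ts_refl]. }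
    apply semi_match_tau_star_l with t'; [exact Hpq | exact Hqt' |].
    eapply dup_wins_challenge; [| exact (game_rel_reset Hw2)].
    eapply dup_wins_spoiler_move; [exact Hw2 | reflexivity |]. apply mS2a. exact Hp.
Qed.

Lemma game_rel_semi_bisim : semi_bisim tau tr x y game_rel.
Proof.
  split.
  - intros p q [H | H]; [right | left]; exact H.
  - intros p q b p' [H | H] Hp; [exact (won_at_match_l H Hp) | exact (won_at_match_r H Hp)].
Qed.

Lemma game_equiv_semi_bisimilar s t : game_equiv tau tr (Exy x y) s t -> semi_bisimilar tau tr x y s t.
Proof. intros H. exact (semi_bisim_sub game_rel_semi_bisim (game_rel_reset H)). Qed.

End Soundness.

Section Completeness.
Context {St Act : Type} (tau : Act) (tr : St -> Act -> St -> Prop) (x y : Mode).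
Notation ts := (tau_star tau tr).
Notation cfg := (config St Act).
Notation move := (move tau tr (Exy x y)).
Notation forces_reset_in := (@forces_reset_in _ _ tau tr (Exy x y)).
Notation forces_reset := (@forces_reset _ _ tau tr (Exy x y)).
Notation sb := (semi_bisimilar tau tr x y).

(* Duplicator's plan for the challenge [u --a--> u'] at position [(u, q)] with
   (⌢)-match at [m]: either (D1), or walk [m ->> t1 --a--> t2 ->> t']. *)
Definition frown_plan (u q : St) (a : Act) (u' m : St) : Prop :=
  (a = tau /\ sb u' m) \/
  exists t1 t2 t', ts m t1 /\ tr t1 a t2 /\ ts t2 t' /\ sb u' t' /\
                   (x = B -> q = m /\ sb u t1) /\ (y = B -> t2 = t').

Definition smile_plan (u' m : St) : Prop :=
  y = O /\ exists m1 t', tr m tau m1 /\ ts m1 t' /\ sb u' t'.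

Definition on_plan (c : cfg) : Prop :=
  match c with
  | Cfg (p, q) None _ _ o => o = Spoiler /\ sb p q
  | Cfg (p, q) (Some (a, u')) (Some (m, Frown)) _ _ => sb p q /\ frown_plan p q a u' m
  | Cfg (p, q) (Some (a, u')) (Some (m, Smile)) _ _ => sb p q /\ smile_plan u' m
  | _ => False
  end.

Lemma frown_plan_of_step p q a p' : sb p q -> tr p a p' -> frown_plan p q a p' q.
Proof.
  intros Hpq Hp.
  destruct (proj2 (semi_bisimilar_generic_bisim tau tr x y) _ _ _ _ Hpq Hp)
    as [[Ha Hp'q] | [t' [t1 [t2 [Ht1 [Ht [Ht2 Hp't']]]]]]]; [left; auto | right].
  apply gstep_iff in Ht1 as [Hqt1 Hx], Ht2 as [Ht2t' Hy].
  destruct y.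
  - exists t1, t2, t'. repeat split; auto; try apply Hx; auto; discriminate.
  - exists t1, t2, t2. repeat split; auto using ts_refl; apply Hx || apply Hy; auto.
Qed.

Lemma on_plan_spoiler_move c d : on_plan c -> cown c = Spoiler -> move c d -> on_plan d.
Proof.
  intros Hc Hown Hmv.
  assert (Hpos : forall s t ch m r, on_plan (Cfg (s, t) ch m r Spoiler) -> sb s t).
  { intros s t [[a u'] |] [[m []] |] r; simpl; tauto. }
  destruct Hmv; simpl in Hown; try discriminate; simpl.
  - destruct c as [[a u'] |]; [exact Hc | congruence].
  - split; [exact (Hpos _ _ _ _ _ Hc) | exact (frown_plan_of_step (Hpos _ _ _ _ _ Hc) H)].
  - split; [exact (Hpos _ _ _ _ _ Hc) | exact (frown_plan_of_step (Hpos _ _ _ _ _ Hc) H)].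
  - pose proof (semi_bisimilar_sym (Hpos _ _ _ _ _ Hc)) as Hts.
    split; [exact Hts | exact (frown_plan_of_step Hts H)].
Qed.

Lemma smile_forces_reset p q a u' m m1 t' r : y = O -> sb p q -> tr m tau m1 -> ts m1 t' -> sb u' t' ->
  exists n, forces_reset_in on_plan n (Cfg (p, q) (Some (a, u')) (Some (m, Smile)) r Duplicator).
Proof.
  intros Hy Hpq Hm Hm1 Hu't'. revert m r Hm.
  induction Hm1 as [t' | m1 m2 t' Hm12 Hm2 IH]; intros m r Hm.
  - exists 0. eapply forces_reset_now; [apply mD3b; [exact Hm | reflexivity] | simpl; auto | reflexivity].
  - destruct (IH Hu't' m1 false Hm12) as [n Hn]. exists (S n).
    eapply forces_reset_later; [apply mD3c; [exact Hm | now apply Exy_smile] | | discriminate | exact Hn].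
    simpl. split; [exact Hpq |]. split; [exact Hy |]. exists m2, t'. auto.
Qed.

Lemma frown_path_forces_reset p a u' t1 t2 t' m q r :
  tr t1 a t2 -> ts t2 t' -> sb u' t' -> (y = B -> t2 = t') ->
  ts m t1 -> sb p q -> (x = B -> q = m /\ sb p t1) ->
  exists n, forces_reset_in on_plan n (Cfg (p, q) (Some (a, u')) (Some (m, Frown)) r Duplicator).
Proof.
  intros Ht Ht2t' Hu't' Hy Hmt1. revert q r.
  induction Hmt1 as [t1 | m m1 t1 Hm Hm1 IH]; intros q r Hpq Hx.
  - assert (Hreset : sb u' t2 ->
      exists n, forces_reset_in on_plan n (Cfg (p, q) (Some (a, u')) (Some (t1, Frown)) r Duplicator)).
    { intros Hu't2. exists 0.
      eapply forces_reset_now; [apply mD2b; [reflexivity | exact Ht] | simpl; auto | reflexivity]. }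
    assert (Hye : y = O \/ y = B) by (destruct y; auto).
    destruct Hye as [Hye | Hye]; [| apply Hreset; rewrite (Hy Hye); exact Hu't'].
    destruct Ht2t' as [t2 | t2 k t' Ht2 Hk]; [exact (Hreset Hu't') |].
    destruct (smile_forces_reset a false Hye Hpq Ht2 Hk Hu't') as [n Hn].
    exists (S n).
    eapply forces_reset_later; [apply mD2c; [reflexivity | exact Ht | now apply Exy_smile] | | discriminate | exact Hn].
    simpl. split; [exact Hpq |]. split; [exact Hye |]. exists k, t'. auto.
  - assert (Hplan : forall q', (x = B -> q' = m1 /\ sb p t1) -> frown_plan p q' a u' m1)
      by (intros q' Hx'; right; exists t1, t2, t'; repeat split; auto; apply Hx'; auto).
    assert (Hxe : x = O \/ x = B) by (destruct x; auto).
    destruct Hxe as [Hxe | Hxe].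
    + destruct (IH Ht q false Hpq ltac:(congruence)) as [n Hn]. exists (S n).
      eapply forces_reset_later; [apply mD3c; [exact Hm | now apply Exy_frown] | | discriminate | exact Hn].
      simpl. split; [exact Hpq | apply Hplan; congruence].
    + destruct (Hx Hxe) as [-> Hpt1].
      (* (D3a) moves the position along the path; stuttering keeps it related. *)
      assert (Hpm1 : sb p m1) by exact (semi_bisimilar_stutter Hpq (tau_star_one Hm) Hm1 Hpt1).
      destruct (IH Ht m1 false Hpm1 (fun _ => conj eq_refl Hpt1)) as [n Hn]. exists (S n).
      eapply forces_reset_later; [apply mD3a; exact Hm | | discriminate | exact Hn].
      simpl. split; [exact Hpm1 | apply Hplan; auto].
Qed.

Lemma on_plan_forces_reset c : on_plan c -> cown c = Duplicator -> forces_reset on_plan c.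
Proof.
  intros Hc Hown.
  destruct c as [[p q] [[a u'] |] [[m []] |] r o]; simpl in Hc, Hown; subst o;
    try contradiction; try (destruct Hc; discriminate).
  - destruct Hc as [Hpq [[-> Hu'm] | [t1 [t2 [t' [Hmt1 [Ht [Ht2t' [Hu't' [Hx Hy]]]]]]]]]].
    + exists 0. eapply forces_reset_now; [apply mD1; reflexivity | simpl; auto | reflexivity].
    + exact (frown_path_forces_reset r Ht Ht2t' Hu't' Hy Hmt1 Hpq Hx).
  - destruct Hc as [Hpq [Hy [m1 [t' [Hm [Hm1 Hu't']]]]]].
    exact (smile_forces_reset a r Hy Hpq Hm Hm1 Hu't').
Qed.

Lemma semi_bisimilar_game_equiv s t : sb s t -> game_equiv tau tr (Exy x y) s t.
Proof.
  intros Hst. apply dup_wins_of_invariant with on_plan.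
  - exact on_plan_spoiler_move.
  - exact on_plan_forces_reset.
  - simpl. auto.
Qed.

End Completeness.

Theorem theorem5p2 (St Act : Type) (tau : Act) (tr : St -> Act -> St -> Prop)
  (x y : Mode) (s t : St) :
  generic_bisimilar tau tr x y s t <-> game_equiv tau tr (Exy x y) s t.
Proof.
  split.
  - intros [R [HR Hst]].
    exact (semi_bisimilar_game_equiv (semi_bisim_sub (generic_bisim_semi HR) Hst)).
  - intros Hgame. exists (semi_bisimilar tau tr x y). split.
    + exact (semi_bisimilar_generic_bisim tau tr x y).
    + exact (game_equiv_semi_bisimilar Hgame).
Qed.
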